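(* Let $G$ be a connected graph on $n\ge2$ vertices with transmissions $\mathbb{D}_1\ge\mathbb{D}_2\ge\cdots\ge\mathbb{D}_n$ and diameter $d$. Then for $1\le i\le n$, \[\rho(\mathbb{D}(G))\le \frac{\mathbb{D}_i-d+\sqrt{(\mathbb{D}_i+d)^2+4d\sum_{k=1}^{i-1}(\mathbb{D}_k-\mathbb{D}_i)}}{2},\] with equality if and only if $\mathbb{D}_1=\mathbb{D}_2=\cdots=\mathbb{D}_n$.
   Context: $\mathbb{D}(G)=(d_{ij})$ is the distance matrix of $G$; the transmission of $v_i$ is $\mathbb{D}_i=\sum_j d_{ij}$; $\rho$ is the spectral radius. An empty sum equals $0$. *)

From HB Require Import structures.
From mathcomp Require Import all_boot all_order all_algebra all_field.
From Stdlib Require Import ClassicalEpsilon.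
Set Implicit Arguments. Unset Strict Implicit. Unset Printing Implicit Defensive.
Import Order.TTheory GRing.Theory Num.Theory.

Definition simple_graph (n : nat) (e : rel 'I_n) : Prop :=
  irreflexive e /\ symmetric e.

Definition connected_graph (n : nat) (e : rel 'I_n) : Prop :=
  forall x y : 'I_n, connect e x y.

Definition walk_of_length (n : nat) (e : rel 'I_n) (k : nat) (x y : 'I_n) : bool :=
  [exists p : k.-tuple 'I_n, path e x p && (last x p == y)].

(* graph distance: least k with a walk of length k (any shortest walk has
   length < n in a connected graph; value n if y unreachable). *)
Definition gdist (n : nat) (e : rel 'I_n) (x y : 'I_n) : nat :=
  find (fun k => walk_of_length e k x y) (iota 0 n).

Definition diameter (n : nat) (e : rel 'I_n) : nat :=
  \max_(x : 'I_n) \max_(y : 'I_n) gdist e x y.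

Definition transmission (n : nat) (e : rel 'I_n) (x : 'I_n) : nat :=
  \sum_(y : 'I_n) gdist e x y.

Local Open Scope ring_scope.

Definition dist_matrix (n : nat) (e : rel 'I_n) : 'M[algC]_n :=
  \matrix_(i, j) (gdist e i j)%:R.

Definition is_spectral_radius (n : nat) (A : 'M[algC]_n) (r : algC) : Prop :=
  (exists2 l : algC, eigenvalue A l & r = `|l|) /\
  (forall m : algC, eigenvalue A m -> `|m| <= r).

Definition spectral_radius (n : nat) (A : 'M[algC]_n) : algC :=
  epsilon (inhabits 0) (fun r => is_spectral_radius A r).

From HB Require Import structures.
From mathcomp Require Import all_boot all_order all_algebra all_field.
From mathcomp Require Import ring lra.
From Stdlib Require Import ClassicalEpsilon.
Import Order.TTheory GRing.Theory Num.Theory.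
Local Open Scope ring_scope.

(* Let m be an eigenvalue of the distance matrix with left eigenvector v.  The
   moduli |v_k|, scaled so that their maximum (attained at p) is 1, give weights
   w in [0, 1] with |m| w_k <= sum_j w_j d(j,k) (perron_weights).  Writing
   T = sum_k w_k, summing these inequalities gives |m| T <= sum_j w_j D_j, which
   is at most D_i T + S with S = sum_(k<i) (D_k - D_i) because the transmissions
   are nonincreasing (prefix_weighted_bound); column p gives |m| <= d (T - 1).
   Eliminating T yields (|m| - D_i)(|m| + d) <= d S, i.e. |m| is at most the
   larger root of the quadratic (quadratic_root_bound).  In the equality case
   either S = 0 and |m| = D_i is the maximal transmission, which forces w = 1
   and all transmissions equal (eigen_transmission_max), or both estimates are
   tight, which puts every vertex at distance diam from p, so the diameter is
   1 and the graph is complete (tight_diameter_le1).  Conversely, for a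
   transmission-regular graph the bound equals D_i, an eigenvalue for the
   all-ones vector. *)

Lemma exists_max_real {R : numDomainType} {T : finType} (f : T -> R) (x0 : T) :
  (forall x, f x \is Num.real) -> exists z, forall x, f x <= f z.
Proof.
move=> fR.
suff [z _ zmax] : exists2 z, z \in enum T & forall x, x \in enum T -> f x <= f z.
  by exists z => x; apply: zmax; rewrite mem_enum.
have : x0 \in enum T by rewrite mem_enum.
elim: (enum T) x0 => [|a s IH] // x0 _.
case: s IH => [|b s] IH.
  by exists a => [|x]; rewrite ?mem_seq1 ?mem_head // => /eqP ->.
have [z zin zmax] := IH b (mem_head b s).
case/orP: (real_leVge (fR a) (fR z)) => [az|za].
  exists z; first by rewrite in_cons zin orbT.
  by move=> x; rewrite in_cons => /orP [/eqP ->|/zmax].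
exists a; first exact: mem_head.
by move=> x; rewrite in_cons => /orP [/eqP ->//|/zmax/le_trans]; apply.
Qed.

(* Every nontrivial complex matrix has a spectral radius: the eigenvalues are
   the finitely many roots of the characteristic polynomial. *)
Lemma spectral_radius_exists {n : nat} (A : 'M[algC]_n) :
  (0 < n)%N -> exists r, is_spectral_radius A r.
Proof.
move=> n_gt0.
have [rs char_rs] := closed_field_poly_normal (char_poly A).
have eigE a : eigenvalue A a = (a \in rs).
  by rewrite eigenvalue_root_char char_rs (eqP (char_poly_monic A)) scale1r
             root_prod_XsubC.
have [a0 eig_a0] := eigenvalue_closed A n_gt0.
pose T := seq_sub rs.
have x0 : T by exists a0; rewrite -eigE.
have [z zmax] := exists_max_real (fun x => `|val x|) x0 (fun x => normr_real _).
exists `|val z|; split; first by exists (val z); rewrite // eigE (valP z).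
by move=> m; rewrite eigE => m_rs; apply: (zmax (SeqSub m_rs)).
Qed.

Lemma spectral_radiusP {n : nat} (A : 'M[algC]_n) :
  (0 < n)%N -> is_spectral_radius A (spectral_radius A).
Proof. by move=> n_gt0; apply: epsilon_spec; apply: spectral_radius_exists. Qed.

Section Distances.
Context {n : nat} (e : rel 'I_n).

Lemma gdist_le_walk (k : nat) (x y : 'I_n) :
  (k < n)%N -> walk_of_length e k x y -> (gdist e x y <= k)%N.
Proof.
move=> k_lt_n walk_k; rewrite /gdist; case: leqP => // k_lt.
by have := before_find 0%N k_lt; rewrite nth_iota // add0n walk_k.
Qed.

Lemma gdist_refl (x : 'I_n) : gdist e x x = 0%N.
Proof.
apply/eqP; rewrite -leqn0; apply: gdist_le_walk; first exact: leq_ltn_trans (leq0n x) (ltn_ord x).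
by apply/existsP; exists [tuple]; rewrite /=.
Qed.

Lemma gdist_gt0 (x y : 'I_n) : x != y -> (0 < gdist e x y)%N.
Proof.
move=> xy; rewrite lt0n; apply/eqP => dist0.
have n_gt0 : (0 < n)%N := leq_ltn_trans (leq0n x) (ltn_ord x).
have : has (fun k => walk_of_length e k x y) (iota 0 n).
  by rewrite has_find size_iota -/(gdist e x y) dist0.
move/(nth_find 0%N); rewrite -/(gdist e x y) dist0 nth_iota //.
case/existsP => p /andP [_]; rewrite (size0nil (size_tuple p)) /= => /eqP yx.
by rewrite yx eqxx in xy.
Qed.

Lemma gdist_le_diameter (x y : 'I_n) : (gdist e x y <= diameter e)%N.
Proof.
apply: leq_trans (leq_bigmax x).
exact: (leq_bigmax (F := fun y => gdist e x y) y).
Qed.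

Hypothesis e_simple : simple_graph e.

Lemma walk_rev (k : nat) (x y : 'I_n) :
  walk_of_length e k x y -> walk_of_length e k y x.
Proof.
case: e_simple => _ e_sym /existsP [p /andP [p_path /eqP p_last]].
have size_rev_p : size (rev (belast x p)) == k.
  by rewrite size_rev size_belast size_tuple.
apply/existsP; exists (Tuple size_rev_p) => /=; apply/andP; split.
  rewrite -p_last rev_path.
  by rewrite (eq_path (e' := e)) // => a b /=; rewrite e_sym.
by move: p_last; case: (tval p) => [|a s] /= <- //; rewrite rev_cons last_rcons.
Qed.

Lemma gdist_sym (x y : 'I_n) : gdist e x y = gdist e y x.
Proof. by apply: eq_find => k; apply/idP/idP; apply: walk_rev. Qed.

Lemma transmission_col (k : 'I_n) :
  (transmission e k)%:R = \sum_j (gdist e j k)%:R :> algC.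
Proof. by rewrite natr_sum; apply: eq_bigr => j _; rewrite gdist_sym. Qed.

Lemma exists_neighbour (p : 'I_n) :
  (2 <= n)%N -> connected_graph e -> exists2 r, r != p & (gdist e p r <= 1)%N.
Proof.
case: e_simple => e_irr _ n_ge2 e_conn.
have [q qp] : exists q : 'I_n, q != p.
  have n_gt0 : (0 < n)%N by apply: ltn_trans n_ge2.
  case: (eqVneq p (Ordinal n_gt0)) => [->|p0]; first by exists (Ordinal n_ge2).
  by exists (Ordinal n_gt0); rewrite eq_sym.
case/connectP: (e_conn p q) => [[|r s] /=]; first by move=> _ qE; rewrite qE eqxx in qp.
case/andP=> epr _ _; exists r; first by apply: contraTneq epr => ->; rewrite e_irr.
by apply: gdist_le_walk => //; apply/existsP; exists [tuple r]; rewrite /= epr eqxx.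
Qed.

Lemma transmission_diameter_le1 (x : 'I_n) :
  (diameter e <= 1)%N -> transmission e x = n.-1.
Proof.
move=> diam1.
have gdistE y : gdist e x y = (x != y).
  case: (eqVneq x y) => [->|xy]; first by rewrite gdist_refl.
  by apply/eqP; rewrite eqn_leq gdist_gt0 // (leq_trans (gdist_le_diameter _ _)).
rewrite /transmission (bigD1 x) //= gdist_refl add0n.
rewrite (eq_bigr (fun _ => 1%N)) => [|y yx]; last by rewrite gdistE eq_sym yx.
by rewrite sum_nat_const cardC1 card_ord muln1.
Qed.

End Distances.

(* Perron comparison vector: if m is an eigenvalue of a nonnegative matrix A,
   the moduli of a left eigenvector, scaled to have maximum 1, give weights
   w with |m| w_k <= (w A)_k. *)
Lemma perron_weights {n : nat} {A : 'M[algC]_n} {m : algC} :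
  (forall j k, 0 <= A j k) -> eigenvalue A m ->
  exists w : 'I_n -> algC, exists p : 'I_n,
    [/\ forall k, 0 <= w k <= 1, w p = 1
      & forall k, `|m| * w k <= \sum_j w j * A j k].
Proof.
move=> A_ge0 /eigenvalueP [v vA v_neq0].
have vAk k : \sum_j v 0 j * A j k = m * v 0 k.
  by have := congr1 (fun M : 'rV_n => M 0 k) vA; rewrite !mxE.
have /existsP [k0 vk0] : [exists k, v 0 k != 0].
  apply: contraNT v_neq0 => /existsPn v0.
  by apply/eqP/rowP => k; rewrite mxE; apply/eqP/negPn/v0.
have [p pmax] := exists_max_real (fun k => `|v 0 k|) k0 (fun k => normr_real _).
have c_gt0 : 0 < `|v 0 p| by apply: lt_le_trans (pmax k0); rewrite normr_gt0.
exists (fun k => `|v 0 k| / `|v 0 p|), p; split.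
- by move=> k; rewrite divr_ge0 ?normr_ge0 //= ler_pdivrMr // mul1r.
- by rewrite divff // gt_eqF.
- move=> k; under eq_bigr do rewrite mulrAC.
  rewrite mulrA -normrM -vAk -mulr_suml ler_wpM2r ?invr_ge0 ?normr_ge0 //.
  apply: le_trans (ler_norm_sum _ _ _) _; apply: ler_sum => j _.
  by rewrite normrM (ger0_norm (A_ge0 j k)).
Qed.

Section PrefixBound.
Context {R : numDomainType} {n : nat} {D : 'I_n -> R} {i : 'I_n}.
Hypothesis D_noninc : forall a b : 'I_n, (a <= b)%N -> D b <= D a.

Let S := \sum_(k < n | (k < i)%N) (D k - D i).

Lemma prefix_excess_ge0 : 0 <= S.
Proof. by apply: sumr_ge0 => k ki; rewrite subr_ge0 D_noninc // ltnW. Qed.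

Lemma prefix_weighted_bound {w : 'I_n -> R} :
  (forall k, 0 <= w k <= 1) -> \sum_j w j * D j <= D i * \sum_j w j + S.
Proof.
move=> w01.
have -> : \sum_j w j * D j = D i * \sum_j w j + \sum_j w j * (D j - D i).
  by rewrite mulr_sumr -big_split; apply: eq_bigr => j _ /=; ring.
rewrite lerD2l (bigID (fun j : 'I_n => (j < i)%N)) /= -[S]addr0.
rewrite /S; apply: lerD.
  apply: ler_sum => j ji; case/andP: (w01 j) => _ wj1.
  by rewrite ler_piMl // subr_ge0 D_noninc // ltnW.
apply: sumr_le0 => j ji; case/andP: (w01 j) => wj0 _.
by rewrite mulr_ge0_le0 // subr_le0 D_noninc // leqNgt.
Qed.

Lemma prefix_excess_eq0 : S = 0 -> forall k, D k <= D i.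
Proof.
move=> S0 k; case: (ltnP k i) => [ki|]; last exact: D_noninc.
have /eqP : D k - D i = 0.
  by apply: (psumr_eq0P _ S0) => // a ai; rewrite subr_ge0 D_noninc // ltnW.
by rewrite subr_eq0 => /eqP ->.
Qed.

End PrefixBound.

(* Eliminating T between rho T <= Di T + S and rho <= d (T - 1) gives
   (rho - Di)(rho + d) <= d S, i.e. rho is at most the larger root
   (Di - d + q) / 2 of the quadratic; equality forces either S = 0 and rho = Di,
   or both input inequalities to be tight. *)
Lemma quadratic_root_bound {R : realFieldType} (rho Di d S T q : R) :
  0 < d -> 0 <= S -> 0 <= rho -> 0 <= Di -> 1 <= T ->
  rho * T <= Di * T + S -> rho <= d * (T - 1) ->
  0 <= q -> q ^+ 2 = (Di + d) ^+ 2 + 4 * d * S ->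
  rho <= (Di - d + q) / 2 /\
  (rho = (Di - d + q) / 2 ->
     (S = 0 /\ rho = Di) \/
     [/\ Di < rho, rho = d * (T - 1) & rho * T = Di * T + S]).
Proof.
move=> d_gt0 S_ge0 rho_ge0 Di_ge0 T_ge1 rowT diamT q_ge0 qE.
have q_ge : Di + d <= q by nra.
have [rho_le|Di_lt] := lerP rho Di.
  split=> [|rhoE]; first lra.
  have rhoDi : rho = Di by lra.
  have qDi : q = Di + d by lra.
  by left; split=> //; rewrite qDi in qE; nra.
have prodS : (rho - Di) * (rho + d) <= d * S by nra.
have root_le : 2 * rho + d - Di <= q by nra.
split=> [|rhoE]; first lra; right.
have prodE : (rho - Di) * (rho + d) = d * S by nra.
have rhodT : rho + d = d * T by nra.
by split=> //; nra.
Qed.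

(* The same statement in algC: all quantities are nonnegative, hence real, so
   it transfers from the real closed field algR. *)
Lemma quadratic_root_boundC {rho Di d S T q : algC} :
  0 < d -> 0 <= S -> 0 <= rho -> 0 <= Di -> 1 <= T ->
  rho * T <= Di * T + S -> rho <= d * (T - 1) ->
  0 <= q -> q ^+ 2 = (Di + d) ^+ 2 + 4 * d * S ->
  rho <= (Di - d + q) / 2 /\
  (rho = (Di - d + q) / 2 ->
     (S = 0 /\ rho = Di) \/
     [/\ Di < rho, rho = d * (T - 1) & rho * T = Di * T + S]).
Proof.
move=> d_gt0 S_ge0 rho_ge0 Di_ge0 T_ge1 rowT diamT q_ge0 qE.
have rhoR := ger0_real rho_ge0; have DiR := ger0_real Di_ge0.
have dR := gtr0_real d_gt0; have SR := ger0_real S_ge0.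
have TR := ger0_real (le_trans ler01 T_ge1); have qR := ger0_real q_ge0.
pose r x (xR : x \is Creal) := in_algR xR.
have qE' : r _ qR ^+ 2 = (r _ DiR + r _ dR) ^+ 2 + 4 * r _ dR * r _ SR.
  by apply: val_inj; exact: qE.
have [bound eq_case] := @quadratic_root_bound _ (r _ rhoR) (r _ DiR) (r _ dR)
  (r _ SR) (r _ TR) (r _ qR) d_gt0 S_ge0 rho_ge0 Di_ge0 T_ge1
  rowT diamT q_ge0 qE'.
split=> // rhoE.
have /eq_case[[S0 rhoDi]|[Di_lt rhoD rhoT]] : r _ rhoR = (r _ DiR - r _ dR + r _ qR) / 2.
- by apply: val_inj; exact: rhoE.
- by left; split; [move/(congr1 val): S0 | move/(congr1 val): rhoDi].
- by right; split; [exact: Di_lt | move/(congr1 val): rhoD | move/(congr1 val): rhoT].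
Qed.

Section WeightedDistanceBounds.
Context {n : nat} {e : rel 'I_n}.
Let G (j k : 'I_n) : algC := (gdist e j k)%:R.
Let D (k : 'I_n) : algC := (transmission e k)%:R.
Let d : algC := (diameter e)%:R.

Context {m : algC} {w : 'I_n -> algC} {p : 'I_n}.
Hypotheses (w01 : forall k, 0 <= w k <= 1) (wp : w p = 1)
  (w_sub : forall k, `|m| * w k <= \sum_j w j * G j k).
Hypothesis e_simple : simple_graph e.

Let T := \sum_k w k.

Lemma weight_ge0 k : 0 <= w k. Proof. by case/andP: (w01 k). Qed.

Lemma weights_off_p : T - 1 = \sum_(j | j != p) w j.
Proof. by rewrite /T (bigD1 p) //= wp addrC addrK. Qed.

Lemma weights_sum_ge1 : 1 <= T.
Proof. by rewrite -subr_ge0 weights_off_p sumr_ge0 // => j _; apply: weight_ge0. Qed.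

Lemma weighted_transmission_bound : `|m| * T <= \sum_j w j * D j.
Proof.
rewrite /T mulr_sumr; apply: le_trans (ler_sum _ (fun k _ => w_sub k)) _.
rewrite exchange_big /=; apply: ler_sum => j _.
by rewrite /D /transmission natr_sum mulr_sumr.
Qed.

(* Column p of the comparison inequality, where w p = 1 and G p p = 0. *)
Lemma weighted_column_p : `|m| <= \sum_(j | j != p) w j * G j p.
Proof. by have := w_sub p; rewrite wp mulr1 (bigD1 p) //= /G gdist_refl mulr0 add0r. Qed.

Lemma weighted_column_p_le : \sum_(j | j != p) w j * G j p <= d * (T - 1).
Proof.
rewrite weights_off_p mulr_sumr; apply: ler_sum => j _.
by rewrite mulrC ler_wpM2r ?weight_ge0 // ler_nat gdist_le_diameter.
Qed.

Lemma weighted_diameter_bound : `|m| <= d * (T - 1).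
Proof. exact: le_trans weighted_column_p weighted_column_p_le. Qed.

(* If |m| dominates every transmission, all transmissions equal |m|: column p
   forces w = 1 everywhere, and then every column is tight. *)
Lemma eigen_transmission_max :
  (forall k, D k <= `|m|) -> forall k, D k = `|m|.
Proof.
move=> D_le k.
have col_p : `|m| <= \sum_j w j * G j p by have := w_sub p; rewrite wp mulr1.
have wG_le j : w j * G j p <= G j p by case/andP: (w01 j) => _; apply: ler_piMl.
have sumG : \sum_j G j p = `|m|.
  apply: le_anti; rewrite -transmission_col // D_le /=.
  by rewrite (le_trans col_p) ?transmission_col ?ler_sum.
have w1 j : w j = 1.
  have [->//|jp] := eqVneq j p.
  have nonneg a : true -> 0 <= G a p - w a * G a p by rewrite subr_ge0.
  have sum0 : \sum_a (G a p - w a * G a p) = 0.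
    apply/eqP; rewrite sumrB subr_eq0 sumG eq_le col_p /= -sumG.
    by apply: ler_sum => a _; apply: wG_le.
  move: (psumr_eq0P nonneg sum0 (i := j) isT) => /eqP.
  rewrite -{1}[G j p]mul1r -mulrBl mulf_eq0 /G pnatr_eq0 eqn0Ngt gdist_gt0 //.
  by rewrite orbF subr_eq0 => /eqP.
apply: le_anti; rewrite D_le /= /D transmission_col //.
by have := w_sub k; rewrite w1 mulr1; under eq_bigr do rewrite w1 mul1r.
Qed.

(* If both weighted bounds are tight, every vertex other than p lies at distance
   exactly diam from p; as p has a neighbour, the diameter is at most one. *)
Lemma tight_diameter_le1 :
  (2 <= n)%N -> connected_graph e -> 0 < `|m| ->
  `|m| * T = \sum_j w j * D j -> `|m| = d * (T - 1) ->
  (diameter e <= 1)%N.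
Proof.
move=> n_ge2 e_conn m_gt0 rowE diamE.
have eigen k : `|m| * w k = \sum_j w j * G j k.
  have nonneg a : true -> 0 <= \sum_j w j * G j a - `|m| * w a.
    by rewrite subr_ge0.
  have sum0 : \sum_a (\sum_j w j * G j a - `|m| * w a) = 0.
    rewrite sumrB -mulr_sumr rowE exchange_big /=; apply/eqP; rewrite subr_eq0.
    by apply/eqP/eq_bigr => j _; rewrite /D /transmission natr_sum mulr_sumr.
  move: (psumr_eq0P nonneg sum0 (i := k) isT) => /eqP.
  by rewrite subr_eq0 => /eqP.
have w_gt0 k : k != p -> 0 < w k.
  move=> kp; rewrite -(pmulr_rgt0 _ m_gt0) eigen (bigD1 p) //= wp mul1r.
  apply: (@lt_le_trans _ _ (G p k)); first by rewrite /G ltr0n gdist_gt0 // eq_sym.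
  by rewrite lerDl sumr_ge0 // => j _; rewrite mulr_ge0 ?weight_ge0.
have far j : j != p -> gdist e j p = diameter e.
  move=> jp.
  have nonneg a : a != p -> 0 <= w a * (d - G a p).
    by rewrite mulr_ge0 ?weight_ge0 // subr_ge0 ler_nat gdist_le_diameter.
  have sum0 : \sum_(a | a != p) w a * (d - G a p) = 0.
    under eq_bigr do rewrite mulrBr.
    rewrite sumrB -mulr_suml -weights_off_p mulrC -diamE; apply/eqP.
    by rewrite subr_eq0 eq_le weighted_column_p diamE weighted_column_p_le.
  move: (psumr_eq0P nonneg sum0 jp) => /eqP.
  by rewrite mulf_eq0 gt_eqF ?w_gt0 //= subr_eq0 eqr_nat => /eqP.
have [r rp pr_le1] := exists_neighbour _ e_simple p n_ge2 e_conn.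
by rewrite -(far r rp) gdist_sym.
Qed.

End WeightedDistanceBounds.

Definition transmission_bound {n : nat} (e : rel 'I_n) (i : 'I_n) : algC :=
  let Di : algC := (transmission e i)%:R in
  let d : algC := (diameter e)%:R in
  (Di - d + sqrtC ((Di + d) ^+ 2 + 4 * d *
      \sum_(k < n | (k < i)%N) ((transmission e k)%:R - Di))) / 2.

Section EigenvalueBound.
Context {n : nat} {e : rel 'I_n}.
Hypotheses (n_ge2 : (2 <= n)%N) (e_simple : simple_graph e)
  (e_conn : connected_graph e)
  (tr_noninc : forall i j : 'I_n, (i <= j)%N -> (transmission e j <= transmission e i)%N).

Let D (k : 'I_n) : algC := (transmission e k)%:R.

Lemma transmission_real_noninc (a b : 'I_n) : (a <= b)%N -> D b <= D a.
Proof. by move=> ab; rewrite ler_nat tr_noninc. Qed.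

Lemma diameter_gt0 : (0 < diameter e)%N.
Proof.
have n_gt0 : (0 < n)%N by apply: ltn_trans n_ge2.
apply: leq_trans (gdist_le_diameter e (Ordinal n_gt0) (Ordinal n_ge2)).
exact: gdist_gt0.
Qed.

Lemma eigenvalue_bound (i : 'I_n) {m : algC} :
  eigenvalue (dist_matrix e) m ->
  `|m| <= transmission_bound e i /\
  (`|m| = transmission_bound e i -> forall j k, transmission e j = transmission e k).
Proof.
move=> eig_m.
have dist_ge0 j k : 0 <= dist_matrix e j k by rewrite mxE ler0n.
have [w [p [w01 wp w_sub]]] := perron_weights dist_ge0 eig_m.
have {}w_sub k : `|m| * w k <= \sum_j w j * (gdist e j k)%:R.
  by have := w_sub k; under [X in _ <= X]eq_bigr do rewrite mxE.
pose S := \sum_(k < n | (k < i)%N) (D k - D i).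
pose q := sqrtC ((D i + (diameter e)%:R) ^+ 2 + 4 * (diameter e)%:R * S).
have S_ge0 : 0 <= S := prefix_excess_ge0 transmission_real_noninc.
have q_ge0 : 0 <= q.
  by rewrite sqrtC_ge0 addr_ge0 ?exprn_ge0 ?addr_ge0 ?mulr_ge0 ?ler0n.
have wsum_le := prefix_weighted_bound (i := i) transmission_real_noninc w01.
have rowT := le_trans (weighted_transmission_bound w_sub) wsum_le.
have d_gt0 : 0 < (diameter e)%:R :> algC by rewrite ltr0n diameter_gt0.
have [bound eq_case] := quadratic_root_boundC d_gt0 S_ge0 (normr_ge0 m) (ler0n _ _)
  (weights_sum_ge1 w01 wp) rowT (weighted_diameter_bound w01 wp w_sub) q_ge0 (sqrtCK _).
split=> // /eq_case [[/(prefix_excess_eq0 transmission_real_noninc) D_le mE]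
                    |[Di_lt diamE rowE]] j k.
  have Dmax : forall k, D k = `|m|.
    by apply: (eigen_transmission_max w01 wp w_sub e_simple) => a; rewrite mE D_le.
  by apply/eqP; rewrite -(eqr_nat algC) -/(D j) -/(D k) !Dmax.
have diam_le1 : (diameter e <= 1)%N.
  apply: (tight_diameter_le1 w01 wp w_sub e_simple n_ge2 e_conn _ _ diamE).
    exact: le_lt_trans Di_lt.
  by apply: le_anti; rewrite (weighted_transmission_bound w_sub) rowE.
by rewrite !transmission_diameter_le1.
Qed.

End EigenvalueBound.

Lemma transmission_bound_regular {n : nat} (e : rel 'I_n) (i : 'I_n) :
  (forall j k, transmission e j = transmission e k) ->
  transmission_bound e i = (transmission e i)%:R.
Proof.
move=> regular; rewrite /transmission_bound big1 => [|k _]; last by rewrite (regular k i) subrr.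
by rewrite mulr0 addr0 sqrCK ?addr_ge0 ?ler0n //; field.
Qed.

(* In a transmission-regular graph the common transmission is an eigenvalue,
   with the all-ones vector as eigenvector. *)
Lemma regular_eigenvalue {n : nat} (e : rel 'I_n) (i : 'I_n) :
  simple_graph e -> (forall j k, transmission e j = transmission e k) ->
  eigenvalue (dist_matrix e) (transmission e i)%:R.
Proof.
move=> e_simple regular; apply/eigenvalueP; exists (const_mx 1).
  apply/rowP => k; rewrite !mxE (regular i k) /transmission natr_sum mulr1.
  by apply: eq_bigr => j _; rewrite !mxE mul1r gdist_sym.
by apply/negP => /eqP/rowP/(_ i)/eqP; rewrite !mxE oner_eq0.
Qed.

Theorem corollary6 (n : nat) (e : rel 'I_n) :
  (2 <= n)%N -> simple_graph e -> connected_graph e ->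
  (forall i j : 'I_n, (i <= j)%N -> (transmission e j <= transmission e i)%N) ->
  forall i : 'I_n,
    let Di : algC := (transmission e i)%:R in
    let d : algC := (diameter e)%:R in
    let bound : algC :=
      (Di - d + sqrtC ((Di + d) ^+ 2 + 4 * d *
          \sum_(k < n | (k < i)%N) ((transmission e k)%:R - Di))) / 2 in
    spectral_radius (dist_matrix e) <= bound /\
    (spectral_radius (dist_matrix e) = bound <->
       (forall j k : 'I_n, transmission e j = transmission e k)).
Proof.
move=> n_ge2 e_simple e_conn tr_noninc i Di d bound.
have -> : bound = transmission_bound e i by [].
have [[l eig_l ->] rho_max] := spectral_radiusP (dist_matrix e) (ltnW n_ge2).
have [l_le eq_case] := eigenvalue_bound n_ge2 e_simple e_conn tr_noninc i eig_l.
split=> //; split=> // regular.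
apply: le_anti; rewrite l_le /= transmission_bound_regular //.
by rewrite -[X in X <= _]normr_nat rho_max // regular_eigenvalue.
Qed.
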